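(* Consider the Jacobi matrix of Example 4.1 and let $x_0\in\mathbb{R}$. Suppose there are constants $C,D>0$ and $\alpha,\beta>0$ such that (i) for all $j\ge1$ and all $n\in C_j\cup A_{j+1}$, $|p_n(x_0)|\le C^{j+1}\exp(\alpha 2^{j^2})$; (ii) for all sufficiently large $j$, $\big(p_{n_j-1}(x_0)^2+p_{n_j}(x_0)^2\big)^{1/2}\ge D^{-(j+1)}\exp(\beta2^{j^2})$, where $n_j$ is the ''center'' of $C_j$. Then $\displaystyle \frac{p_n(x_0)^2}{\sum_{k=0}^n p_k(x_0)^2}$ does not tend to $0$ as $n\to\infty$ (so the Nevai condition fails at $x_0$).
   Context: Example 4.1: partition $\{1,2,\dots\}$ into successive consecutive blocks $A_1,C_1,A_2,C_2,\dots$ with $\#A_j=3^{j^2}$ and $\#C_j=2^{j^2}$; the Jacobi parameters are $b_n=0$ for all $n$, $a_n=1$ for $n\in A_j$, $a_n=\tfrac12$ for $n\in C_j$. $p_n$ ($n\ge0$) are the orthonormal polynomials defined by $p_{-1}=0$, $p_0=1$, $xp_n=a_{n+1}p_{n+1}+b_{n+1}p_n+a_np_{n-1}$. If $C_j=\{m_j+1,\dots,m_j+2^{j^2}\}$, its ''center'' is $n_j=m_j+\tfrac12 2^{j^2}$. The Nevai condition at $x_0$ means $K_n(x,x_0)^2\,d\rho(x)/K_n(x_0,x_0)\to\delta_{x_0}$ weakly, where $\rho$ is the orthogonality measure and $K_n(x,y)=\sum_{j=0}^np_j(x)p_j(y)$. *)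

From Stdlib Require Import Reals Lra Lia List.
Open Scope R_scope.

(* Block structure of Example 4.1.  Indices j >= 1.
   A_j = {blk_start j + 1, ..., blk_start j + 3^(j^2)}
   C_j = {m_blk j + 1, ..., m_blk j + 2^(j^2)}, with m_blk j = blk_start j + 3^(j^2). *)
Fixpoint blk_start (j : nat) : nat :=
  match j with
  | O => 0%nat
  | S O => 0%nat
  | S j' => (blk_start j' + 3 ^ (j' * j') + 2 ^ (j' * j'))%nat
  end.

Definition m_blk (j : nat) : nat := (blk_start j + 3 ^ (j * j))%nat.

Definition inA (j n : nat) : Prop := (1 <= j /\ blk_start j < n <= m_blk j)%nat.
Definition inC (j n : nat) : Prop := (1 <= j /\ m_blk j < n <= m_blk j + 2 ^ (j * j))%nat.

(* Boolean test: does n lie in some C_j?  Since m_blk j >= 3^(j^2) >= j,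
   any j with n in C_j satisfies j < n, so searching j in 1..n suffices. *)
Definition inC_b (j n : nat) : bool :=
  (Nat.ltb (m_blk j) n && Nat.leb n (m_blk j + 2 ^ (j * j)))%bool.
Definition in_some_C (n : nat) : bool := existsb (fun j => inC_b j n) (seq 1 n).

Definition jac_a (n : nat) : R := if in_some_C n then / 2 else 1.
Definition jac_b (n : nat) : R := 0.

(* (p_n(x), p_{n+1}(x)) from p_{-1} = 0, p_0 = 1 and
   x p_n = a_{n+1} p_{n+1} + b_{n+1} p_n + a_n p_{n-1}. *)
Fixpoint pp (x : R) (n : nat) : R * R :=
  match n with
  | O => (1, (x - jac_b 1) / jac_a 1)
  | S k => let (u, v) := pp x k in
           (v, ((x - jac_b (S (S k))) * v - jac_a (S k) * u) / jac_a (S (S k)))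
  end.

Definition p (n : nat) (x : R) : R := fst (pp x n).

Definition center (j : nat) : nat := (m_blk j + 2 ^ (j * j) / 2)%nat.

From Stdlib Require Import Reals Lra Lia.
Open Scope R_scope.

(* Write S_n = sum_{k<=n} p_k(x0)^2 and X_j = 2^(j^2).  A sequence (a_j) is
   called subscale when a_j <= exp(g X_j) eventually for every g > 0, i.e.
   a_j = exp(o(X_j)).  The proof is by contradiction: if p_n^2 / S_n -> 0 then
   S grows subexponentially, S_{n+k} <= exp(b k) S_n for every b > 0 and n large.
   1. Subscale sequences are closed under products; the powers a^(k j^2) and
      the exponentials exp(c X_{j-1}) are subscale.
   2. Hypothesis (i) bounds every p_k^2 with k <= m_j (the last index of A_j) by
      a subscale quantity, since those k lie in blocks C_i, A_(i+1) with i < j;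
      as m_j + 1 <= 4^(j^2), the sum S_{m_j} is subscale as well.
   3. The center n_j lies X_j / 2 steps after m_j, so by slow growth
      S_{n_j} <= exp(b X_j / 2) S_{m_j} = exp(o(X_j)) for any b > 0, while
      hypothesis (ii) forces S_{n_j} >= p_{n_j-1}^2 + p_{n_j}^2
      >= D^(-2(j+1)) exp(2 beta X_j), and D^(2(j+1)) is subscale too: the
      three factors exp(beta X_j / 2) cannot reach exp(2 beta X_j). *)

Lemma sq_le_pow2 (n : nat) : (4 <= n)%nat -> (n * n <= 2 ^ n)%nat.
Proof.
  induction n as [|n IH]; intro Hn; [lia|].
  destruct (Nat.eq_dec n 3) as [->|Hn3]; [simpl; lia|].
  specialize (IH ltac:(lia)). rewrite Nat.pow_succ_r'. nia.
Qed.

Lemma linear_le_pow2 (c : R) :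
  exists N : nat, forall n : nat, (N <= n)%nat -> c * INR n <= INR (2 ^ n).
Proof.
  destruct (INR_unbounded c) as [N0 HN0].
  exists (Nat.max N0 4). intros n Hn.
  assert (Hsq : INR n * INR n <= INR (2 ^ n)).
  { rewrite <- mult_INR. apply le_INR, sq_le_pow2. lia. }
  assert (INR N0 <= INR n) by (apply le_INR; lia).
  assert (0 <= INR n) by apply pos_INR.
  nra.
Qed.

Lemma pow2_prev_square (j : nat) : (1 <= j)%nat ->
  INR (2 ^ ((j - 1) * (j - 1))) * INR (2 ^ j) <= INR (2 ^ (j * j)).
Proof.
  intro Hj. rewrite <- mult_INR, <- Nat.pow_add_r.
  apply le_INR, Nat.pow_le_mono_r; nia.
Qed.

Lemma exp_le (x y : R) : x <= y -> exp x <= exp y.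
Proof.
  intro H. destruct (Rle_lt_or_eq_dec _ _ H) as [Hlt | ->]; [|lra].
  left; apply exp_increasing; exact Hlt.
Qed.

Definition scale (j : nat) : R := INR (2 ^ (j * j)).

Definition subscale (a : nat -> R) : Prop :=
  forall g : R, 0 < g ->
  exists J : nat, forall j : nat, (J <= j)%nat -> a j <= exp (g * scale j).

Lemma scale_pos (j : nat) : 0 < scale j.
Proof. apply lt_0_INR, Nat.neq_0_lt_0, Nat.pow_nonzero; lia. Qed.

Lemma subscale_le (a b : nat -> R) :
  (forall j, (1 <= j)%nat -> a j <= b j) -> subscale b -> subscale a.
Proof.
  intros Hab Hb g Hg. destruct (Hb g Hg) as [J HJ].
  exists (Nat.max J 1). intros j Hj.
  apply Rle_trans with (b j); [apply Hab; lia | apply HJ; lia].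
Qed.

Lemma subscale_mul (a b : nat -> R) :
  (forall j, 0 <= a j) -> (forall j, 0 <= b j) ->
  subscale a -> subscale b -> subscale (fun j => a j * b j).
Proof.
  intros Ha0 Hb0 Ha Hb g Hg.
  destruct (Ha (g / 2) ltac:(lra)) as [Ja HJa].
  destruct (Hb (g / 2) ltac:(lra)) as [Jb HJb].
  exists (Nat.max Ja Jb). intros j Hj.
  replace (g * scale j) with (g / 2 * scale j + g / 2 * scale j) by lra.
  rewrite exp_plus.
  apply Rmult_le_compat; auto; [apply HJa | apply HJb]; lia.
Qed.

(* a^(k j^2) = exp(O(j^2)) is subscale, since j^2 = o(2^(j^2)). *)
Lemma subscale_pow (a : R) (k : nat) : 1 <= a ->
  subscale (fun j => a ^ (k * (j * j))).
Proof.
  intros Ha g Hg.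
  assert (Hln : 0 <= ln a).
  { rewrite <- ln_1. destruct (Rle_lt_or_eq_dec _ _ Ha) as [H | <-]; [|lra].
    left; apply ln_increasing; lra. }
  destruct (linear_le_pow2 (INR k * ln a / g)) as [N HN].
  exists N. intros j Hj.
  rewrite <- (exp_ln (a ^ _)) by (apply pow_lt; lra).
  rewrite ln_pow by lra. apply exp_le.
  assert (HjN := HN (j * j)%nat ltac:(nia)).
  assert (0 <= INR k) by apply pos_INR.
  rewrite mult_INR. unfold scale.
  apply Rmult_le_compat_r with (r := g) in HjN; [|lra].
  replace (INR k * ln a / g * INR (j * j) * g) with (INR k * INR (j * j) * ln a)
    in HjN by (field; lra).
  lra.
Qed.

(* exp(c X_{j-1}) is subscale: X_{j-1} 2^j <= X_j and 2^j eventually exceeds c/g. *)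
Lemma subscale_exp_prev (c : R) : 0 <= c ->
  subscale (fun j => exp (c * INR (2 ^ ((j - 1) * (j - 1))))).
Proof.
  intros Hc g Hg.
  destruct (INR_unbounded (c / g)) as [N HN].
  exists (Nat.max N 1). intros j Hj. apply exp_le.
  set (Y := INR (2 ^ ((j - 1) * (j - 1)))).
  assert (HY : 0 <= Y) by apply pos_INR.
  assert (HXY := pow2_prev_square j ltac:(lia)). fold Y in HXY.
  assert (H2j : c / g <= INR (2 ^ j)).
  { apply Rle_trans with (INR j); [|apply le_INR, Nat.lt_le_incl, Nat.pow_gt_lin_r; lia].
    apply Rle_trans with (INR N); [lra | apply le_INR; lia]. }
  apply Rmult_le_compat_l with (r := Y) in H2j; [|exact HY].
  apply Rmult_le_compat_r with (r := g) in H2j; [|lra].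
  replace (Y * (c / g) * g) with (c * Y) in H2j by (field; lra).
  unfold scale. nra.
Qed.

Section PartialSums.
Variable f : nat -> R.
Hypothesis f_nonneg : forall k, 0 <= f k.

Lemma partial_sum_nonneg (n : nat) : 0 <= sum_f_R0 f n.
Proof. apply cond_pos_sum; exact f_nonneg. Qed.

Lemma partial_sum_le_const (b : R) (n : nat) :
  (forall k, (k <= n)%nat -> f k <= b) -> sum_f_R0 f n <= INR (S n) * b.
Proof.
  intro Hb. rewrite Rmult_comm, <- sum_cte. apply sum_Rle. exact Hb.
Qed.

Lemma last_two_le_partial_sum (n : nat) : (1 <= n)%nat ->
  f (n - 1)%nat + f n <= sum_f_R0 f n.
Proof.
  intro Hn. destruct n as [|n]; [lia|].
  replace (S n - 1)%nat with n by lia.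
  destruct n as [|n]; simpl; [lra|].
  assert (H := partial_sum_nonneg n). simpl in H. lra.
Qed.

(* If f_n / S_n -> 0 (and S_0 > 0), then S grows slower than any exponential:
   each step multiplies S by at most 1 + b <= exp b once f_n / S_n <= b / 2. *)
Lemma slow_growth_of_ratio_cv0 (b : R) : 0 < f 0%nat -> 0 < b ->
  Un_cv (fun n => f n / sum_f_R0 f n) 0 ->
  exists N : nat, forall m k : nat, (N <= m)%nat ->
    sum_f_R0 f (m + k) <= exp (b * INR k) * sum_f_R0 f m.
Proof.
  intros Hf0 Hb Hcv.
  assert (Hpos : forall n, 0 < sum_f_R0 f n).
  { intro n. induction n as [|n IH]; simpl; [exact Hf0|].
    assert (H := f_nonneg (S n)). lra. }
  set (e := Rmin (1 / 2) (b / 2)).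
  assert (He : 0 < e) by (apply Rmin_glb_lt; lra).
  assert (He1 : e <= 1 / 2) by apply Rmin_l. assert (He2 : e <= b / 2) by apply Rmin_r.
  destruct (Hcv e He) as [N HN].
  assert (Hstep : forall m, (N <= m)%nat -> sum_f_R0 f (S m) <= exp b * sum_f_R0 f m).
  { intros m Hm.
    specialize (HN (S m) ltac:(lia)). unfold R_dist in HN. rewrite Rminus_0_r in HN.
    apply Rabs_def2 in HN. destruct HN as [HN _].
    assert (HSm := Hpos m). assert (HSSm := Hpos (S m)).
    assert (Hsmall : f (S m) <= e * sum_f_R0 f (S m)).
    { apply Rmult_lt_compat_r with (r := sum_f_R0 f (S m)) in HN; [|exact HSSm].
      unfold Rdiv in HN. rewrite Rmult_assoc, Rinv_l in HN; lra. }
    change (sum_f_R0 f (S m)) with (sum_f_R0 f m + f (S m)) in *.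
    assert (Hshrink : (1 - e) * (sum_f_R0 f m + f (S m)) <= sum_f_R0 f m) by nra.
    assert (Hfactor : 1 <= (1 + b) * (1 - e)) by nra.
    assert (Hexp := exp_ineq1_le b).
    nra. }
  exists N. intros m k Hm. induction k as [|k IH].
  - rewrite Nat.add_0_r, Rmult_0_r, exp_0. lra.
  - rewrite Nat.add_succ_r, S_INR, Rmult_plus_distr_l, Rmult_1_r, exp_plus.
    apply Rle_trans with (exp b * sum_f_R0 f (m + k)); [apply Hstep; lia|].
    assert (0 < exp b) by apply exp_pos. nra.
Qed.

End PartialSums.

Lemma blk_start_succ (j : nat) : (1 <= j)%nat ->
  blk_start (S j) = (m_blk j + 2 ^ (j * j))%nat.
Proof. intro Hj. destruct j as [|j]; [lia | reflexivity]. Qed.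

Lemma m_blk_succ (j : nat) : (1 <= j)%nat ->
  m_blk (S j) = (m_blk j + 2 ^ (j * j) + 3 ^ (S j * S j))%nat.
Proof. intro Hj. unfold m_blk at 1. rewrite blk_start_succ by exact Hj. lia. Qed.

Lemma blocks_cover (j k : nat) : (1 <= j)%nat -> (m_blk 1 < k <= m_blk j)%nat ->
  exists i : nat, (1 <= i)%nat /\ (i < j)%nat /\ (inC i k \/ inA (S i) k).
Proof.
  revert k. induction j as [|j IH]; intros k Hj Hk; [lia|].
  destruct (Nat.eq_dec j 0) as [->|Hj0]; [lia|].
  destruct (Nat.le_gt_cases k (m_blk j)) as [Hle|Hlt].
  - destruct (IH k ltac:(lia) ltac:(lia)) as [i [Hi1 [Hij Hin]]].
    exists i. repeat split; auto; lia.
  - exists j. split; [lia | split; [lia|]].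
    destruct (Nat.le_gt_cases k (m_blk j + 2 ^ (j * j))) as [HC|HA].
    + left. unfold inC. lia.
    + right. unfold inA. rewrite blk_start_succ by lia.
      rewrite (m_blk_succ j) in Hk |- * by lia. lia.
Qed.

Lemma m_blk_succ_le_pow4 (j : nat) : (1 <= j)%nat -> (m_blk j + 1 <= 4 ^ (j * j))%nat.
Proof.
  induction j as [|j IH]; intro Hj; [lia|].
  destruct (Nat.eq_dec j 0) as [->|Hj0]; [reflexivity|].
  specialize (IH ltac:(lia)).
  rewrite m_blk_succ by lia.
  replace (S j * S j)%nat with (j * j + (2 * j + 1))%nat by lia.
  rewrite (Nat.pow_add_r 3 (j * j)), (Nat.pow_add_r 4 (j * j)).
  assert (H2 : (2 ^ (j * j) <= 4 ^ (j * j))%nat) by (apply Nat.pow_le_mono_l; lia).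
  assert (H3 : (3 ^ (j * j) <= 4 ^ (j * j))%nat) by (apply Nat.pow_le_mono_l; lia).
  assert (Hgap : (3 ^ (2 * j + 1) + 2 <= 4 ^ (2 * j + 1))%nat).
  { rewrite !Nat.pow_add_r, !Nat.pow_mul_r. simpl.
    assert ((3 * 3) ^ j <= (4 * 4) ^ j)%nat by (apply Nat.pow_le_mono_l; lia).
    assert ((4 * 4) ^ 1 <= (4 * 4) ^ j)%nat by (apply Nat.pow_le_mono_r; lia).
    simpl in *. lia. }
  assert (3 ^ (j * j) * 3 ^ (2 * j + 1) <= 4 ^ (j * j) * 3 ^ (2 * j + 1))%nat
    by (apply Nat.mul_le_mono_r; exact H3).
  assert (4 ^ (j * j) * (3 ^ (2 * j + 1) + 2) <= 4 ^ (j * j) * 4 ^ (2 * j + 1))%nat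
    by (apply Nat.mul_le_mono_l; exact Hgap).
  lia.
Qed.

Lemma le_m_blk (j : nat) : (j <= m_blk j)%nat.
Proof.
  unfold m_blk. assert (H := Nat.pow_gt_lin_r 3 (j * j) ltac:(lia)). nia.
Qed.

Section UpperBound.
Variables (x0 C alpha : R).
Hypothesis C_pos : 0 < C.
Hypothesis alpha_nonneg : 0 <= alpha.
Hypothesis bound_i : forall j n : nat, (1 <= j)%nat -> (inC j n \/ inA (S j) n) ->
  Rabs (p n x0) <= C ^ (S j) * exp (alpha * INR (2 ^ (j * j))).

(* Common bound for p_k(x0)^2 over all blocks C_i, A_(i+1) with i < j. *)
Definition block_bound (j : nat) : R :=
  Rmax C 1 ^ (2 * (j * j)) * exp (2 * alpha * INR (2 ^ ((j - 1) * (j - 1)))).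

(* The bound is at least 1, so it also absorbs the first few terms. *)
Lemma block_bound_ge1 (j : nat) : 1 <= block_bound j.
Proof.
  unfold block_bound.
  assert (1 <= Rmax C 1 ^ (2 * (j * j))) by (apply pow_R1_Rle, Rmax_r).
  assert (1 <= exp (2 * alpha * INR (2 ^ ((j - 1) * (j - 1))))).
  { rewrite <- exp_0. apply exp_le. assert (0 <= INR (2 ^ ((j - 1) * (j - 1)))) by apply pos_INR.
    nra. }
  nra.
Qed.

(* Since i <= j - 1, the bound (i) for index i is dominated by the one at j - 1. *)
Lemma sq_p_le_block_bound (j i k : nat) : (1 <= i)%nat -> (i < j)%nat ->
  (inC i k \/ inA (S i) k) -> p k x0 ^ 2 <= block_bound j.
Proof.
  intros Hi Hij Hk.
  set (M := Rmax C 1). set (Y := INR (2 ^ ((j - 1) * (j - 1)))).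
  assert (HC : C ^ S i <= M ^ (j * j)).
  { apply Rle_trans with (M ^ S i).
    - apply pow_incr. split; [lra | apply Rmax_l].
    - apply Rle_pow; [apply Rmax_r | nia]. }
  assert (Hexp : exp (alpha * INR (2 ^ (i * i))) <= exp (alpha * Y)).
  { apply exp_le, Rmult_le_compat_l; [exact alpha_nonneg|].
    apply le_INR, Nat.pow_le_mono_r; [lia | nia]. }
  assert (Habs : Rabs (p k x0) <= M ^ (j * j) * exp (alpha * Y)).
  { apply Rle_trans with (C ^ S i * exp (alpha * INR (2 ^ (i * i)))); [apply bound_i; auto|].
    apply Rmult_le_compat; auto; [apply pow_le; lra | left; apply exp_pos]. }
  apply Rle_trans with ((M ^ (j * j) * exp (alpha * Y)) ^ 2); [apply pow_maj_Rabs, Habs|].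
  unfold block_bound. fold M Y.
  rewrite Rpow_mult_distr, <- pow_mult, Nat.mul_comm.
  replace (exp (alpha * Y) ^ 2) with (exp (2 * alpha * Y)); [lra|].
  simpl. rewrite Rmult_1_r, <- exp_plus. f_equal. ring.
Qed.

(* The indices 0..3 form A_1, which hypothesis (i) does not cover. *)
Let S3 : R := sum_f_R0 (fun k => p k x0 ^ 2) 3.

(* Every index k <= m_j is either one of 0..3 or lies in a block with i < j. *)
Lemma sq_p_le_upto_block (j k : nat) : (1 <= j)%nat -> (k <= m_blk j)%nat ->
  p k x0 ^ 2 <= (S3 + 1) * block_bound j.
Proof.
  intros Hj Hk.
  assert (HB := block_bound_ge1 j).
  assert (HS3 : 0 <= S3) by (apply cond_pos_sum; intro; apply pow2_ge_0).
  assert (Hsq : 0 <= p k x0 ^ 2) by apply pow2_ge_0.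
  destruct (Nat.le_gt_cases k 3) as [Hsmall|Hlarge].
  - assert (p k x0 ^ 2 <= S3).
    { unfold S3. cbn [sum_f_R0].
      assert (H0 := pow2_ge_0 (p 0 x0)). assert (H1 := pow2_ge_0 (p 1 x0)).
      assert (H2 := pow2_ge_0 (p 2 x0)). assert (H3 := pow2_ge_0 (p 3 x0)).
      destruct k as [|[|[|[|k]]]]; [lra | lra | lra | lra | lia]. }
    nra.
  - destruct (blocks_cover j k Hj ltac:(change (m_blk 1) with 3%nat; lia))
      as [i [Hi [Hij Hin]]].
    assert (p k x0 ^ 2 <= block_bound j) by (apply (sq_p_le_block_bound j i); auto).
    nra.
Qed.

(* S_{m_j} <= (m_j + 1) (S_3 + 1) block_bound j, and each factor is subscale. *)
Lemma partial_sum_upto_block_subscale :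
  subscale (fun j => sum_f_R0 (fun k => p k x0 ^ 2) (m_blk j)).
Proof.
  apply subscale_le with (fun j => INR (S (m_blk j)) * ((S3 + 1) * block_bound j)).
  { intros j Hj. apply partial_sum_le_const. intros k Hk. apply sq_p_le_upto_block; auto. }
  assert (HS3 : 0 <= S3) by (apply cond_pos_sum; intro; apply pow2_ge_0).
  apply subscale_mul; [intro; apply pos_INR | intro j; assert (HB := block_bound_ge1 j); nra | |].
  { apply subscale_le with (fun j => 4 ^ (1 * (j * j))); [|apply subscale_pow; lra].
    intros j Hj. replace 4 with (INR 4) by (simpl; lra).
    rewrite <- pow_INR. apply le_INR. rewrite Nat.mul_1_l.
    assert (H := m_blk_succ_le_pow4 j Hj). lia. }
  apply subscale_mul; [intro; lra | intro j; assert (HB := block_bound_ge1 j); lra | |].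
  { apply subscale_le with (fun j => (S3 + 1) ^ (1 * (j * j))); [|apply subscale_pow; lra].
    intros j Hj. rewrite <- (pow_1 (S3 + 1)) at 1. apply Rle_pow; [lra | nia]. }
  apply subscale_mul; [intro; apply pow_le; assert (HM := Rmax_r C 1); lra | intro; left; apply exp_pos | |].
  - apply subscale_pow, Rmax_r.
  - apply subscale_exp_prev. lra.
Qed.

End UpperBound.

(* Slow growth carries S from m_j to n_j = m_j + X_j / 2 at cost exp(b X_j / 2). *)
Lemma center_partial_sum_le (f : nat -> R) (b : R) (N j : nat) :
  (forall k, 0 <= f k) -> 0 <= b ->
  (forall m k : nat, (N <= m)%nat -> sum_f_R0 f (m + k) <= exp (b * INR k) * sum_f_R0 f m) ->
  (N <= m_blk j)%nat ->
  sum_f_R0 f (center j) <= exp (b / 2 * scale j) * sum_f_R0 f (m_blk j).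
Proof.
  intros Hf Hb Hgrowth HN.
  apply Rle_trans with (exp (b * INR (2 ^ (j * j) / 2)) * sum_f_R0 f (m_blk j));
    [apply Hgrowth, HN|].
  apply Rmult_le_compat_r; [apply partial_sum_nonneg; exact Hf|].
  apply exp_le. unfold scale.
  assert (Hhalf := Nat.Div0.mul_div_le (2 ^ (j * j)) 2).
  apply le_INR in Hhalf. rewrite mult_INR in Hhalf. simpl (INR 2) in Hhalf.
  nra.
Qed.

Lemma center_partial_sum_ge (x0 D beta : R) (j : nat) : 0 < D ->
  sqrt (p (center j - 1) x0 ^ 2 + p (center j) x0 ^ 2)
    >= / D ^ (S j) * exp (beta * INR (2 ^ (j * j))) ->
  exp (2 * beta * scale j) <= D ^ (2 * S j) * sum_f_R0 (fun k => p k x0 ^ 2) (center j).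
Proof.
  intros HD Hii.
  set (u := p (center j - 1) x0 ^ 2 + p (center j) x0 ^ 2) in Hii.
  set (t := / D ^ (S j) * exp (beta * INR (2 ^ (j * j)))) in Hii.
  assert (Hd : 0 < D ^ S j) by (apply pow_lt; exact HD).
  assert (Ht : 0 <= t) by (left; apply Rmult_lt_0_compat; [apply Rinv_0_lt_compat, Hd | apply exp_pos]).
  assert (Hu : 0 <= u) by (unfold u; assert (H1 := pow2_ge_0 (p (center j - 1) x0));
                           assert (H2 := pow2_ge_0 (p (center j) x0)); lra).
  assert (Htu : t ^ 2 <= u).
  { rewrite <- (pow2_sqrt u Hu). apply pow_incr. lra. }
  assert (HuS : u <= sum_f_R0 (fun k => p k x0 ^ 2) (center j)).
  { apply (last_two_le_partial_sum (fun k => p k x0 ^ 2)); [intro; apply pow2_ge_0|].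
    assert (H := Nat.pow_nonzero 3 (j * j) ltac:(lia)). unfold center, m_blk. lia. }
  replace (exp (2 * beta * scale j)) with (D ^ (2 * S j) * t ^ 2).
  - apply Rmult_le_compat_l; [apply pow_le; lra | lra].
  - unfold t, scale. rewrite Nat.mul_comm, pow_mult. replace (2 * beta * INR (2 ^ (j * j))) with
      (beta * INR (2 ^ (j * j)) + beta * INR (2 ^ (j * j))) by ring.
    rewrite exp_plus. set (d := D ^ S j) in *. field. lra.
Qed.

(* The three exp(b X / 2) factors leave no room for exp(2 b X). *)
Lemma exp_no_room (b X d s t : R) : 0 < b -> 0 < X -> 0 <= d -> 0 <= s -> 0 <= t ->
  exp (2 * b * X) <= d * s -> d <= exp (b / 2 * X) ->
  s <= exp (b / 2 * X) * t -> t <= exp (b / 2 * X) -> False.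
Proof.
  intros Hb HX Hd Hs Ht Hlow Hdb Hsb Htb.
  set (E := exp (b / 2 * X)) in *.
  assert (HE : 0 < E) by apply exp_pos.
  assert (Hup : d * s <= E * (E * E)).
  { apply Rmult_le_compat; auto. apply Rle_trans with (E * t); [exact Hsb|].
    apply Rmult_le_compat_l; lra. }
  assert (Hgap : E * (E * E) < exp (2 * b * X)).
  { unfold E. rewrite <- !exp_plus. apply exp_increasing. nra. }
  lra.
Qed.

Theorem proposition4p3 (x0 C D alpha beta : R)
  (hC : 0 < C) (hD : 0 < D) (halpha : 0 < alpha) (hbeta : 0 < beta)
  (hi : forall (j n : nat), (1 <= j)%nat -> (inC j n \/ inA (S j) n) ->
          Rabs (p n x0) <= C ^ (S j) * exp (alpha * INR (2 ^ (j * j))))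
  (hii : exists J : nat, forall j : nat, (J <= j)%nat -> (1 <= j)%nat ->
          sqrt (p (center j - 1) x0 ^ 2 + p (center j) x0 ^ 2)
            >= / D ^ (S j) * exp (beta * INR (2 ^ (j * j)))) :
  ~ Un_cv (fun n => p n x0 ^ 2 / sum_f_R0 (fun k => p k x0 ^ 2) n) 0.
Proof.
  intro Hcv.
  set (f := fun k => p k x0 ^ 2).
  assert (Hf : forall k, 0 <= f k) by (intro; apply pow2_ge_0).
  assert (Hf0 : 0 < f 0%nat) by (unfold f, p; simpl; lra).
  destruct (slow_growth_of_ratio_cv0 f Hf beta Hf0 hbeta Hcv) as [N HN].
  destruct (partial_sum_upto_block_subscale x0 C alpha hC (Rlt_le _ _ halpha) hi
              (beta / 2) ltac:(lra)) as [J1 HJ1].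
  destruct (subscale_pow (Rmax D 1) 4 (Rmax_r D 1) (beta / 2) ltac:(lra)) as [J2 HJ2].
  destruct hii as [J0 HJ0].
  set (j := Nat.max N (Nat.max J0 (Nat.max J1 (Nat.max J2 1)))).
  apply (exp_no_room beta (scale j) (D ^ (2 * S j)) (sum_f_R0 f (center j))
           (sum_f_R0 f (m_blk j)) hbeta (scale_pos j)).
  - apply pow_le. lra.
  - apply partial_sum_nonneg. exact Hf.
  - apply partial_sum_nonneg. exact Hf.
  - apply center_partial_sum_ge; [exact hD | apply HJ0; lia].
  - apply Rle_trans with (Rmax D 1 ^ (4 * (j * j))); [|apply HJ2; lia].
    apply Rle_trans with (Rmax D 1 ^ (2 * S j)).
    + apply pow_incr. split; [lra | apply Rmax_l].
    + apply Rle_pow; [apply Rmax_r | nia].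
  - apply center_partial_sum_le with N; [exact Hf | lra | exact HN |].
    apply Nat.le_trans with j; [lia | apply le_m_blk].
  - apply HJ1. lia.
Qed.
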